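(* Consider the TeeRollup protocol described in the context, and let $st_h$ be the latest state recorded by the TeeRollup smart contract (TSC). If a malicious sequencer with a compromised TEE forges an invalid state $st_{h+1}'$ with transaction list $txs_{h+1}'$, i.e. $st_{h+1}'$ is not the state obtained by executing $txs_{h+1}'$ on the initial state $st_h$, then the TSC will not accept $st_{h+1}'$.
   Context: TeeRollup is a rollup protocol on a main chain with finality and smart contracts. There are $n$ sequencers $p_1,\dots,p_n$, each equipped with a TEE enclave $\eta_i$ holding a key pair $(pk_i,sk_i)$ whose public keys are registered on-chain; at most $f$ of these TEEs are compromised (for a compromised TEE the adversary knows $sk_i$ and can sign arbitrary messages), and the remaining TEEs are uncompromised. Malicious sequencers fully control the inputs and outputs of their enclaves (they may choose inputs, delay, drop or replay messages). Rollup states form a chain: a state at height $h$ is $st_h = \langle h, H(st_{h-1}), R_h, H(txs_h)\rangle$, where $H$ is a secure (collision-resistant) hash function, $R_h$ is the Merkle root of the account tree (addresses and balances) and $txs_h$ is the batch of transactions executed to produce $st_h$; the state transition is $st_{h+1} \leftarrow execute(st_h, txs_{h+1})$. An uncompromised enclave, given an input state $s$ and a batch $txs$, runs the fixed protocol program: it outputs the state $execute(s,txs)$, whose previous-hash field is $H(s)$, and signs (with $sk_i$) only states produced this way. A quorum certificate (QC) for a state is a set of valid signatures on its hash from at least $f+1$ distinct registered sequencers. The TSC records the latest accepted state $st_h$ and accepts a submitted state $S$ only if $S$ has height $h+1$, the previous-hash field of $S$ equals $H(st_h)$, and $S$ comes with a valid QC. *)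

From mathcomp Require Import all_boot.
Set Implicit Arguments. Unset Strict Implicit. Unset Printing Implicit Defensive.

(* A rollup state  st_h = < h, H(st_{h-1}), R_h, H(txs_h) >.
   Digest = type of hash values, Root = type of Merkle roots. *)
Record RState (Digest Root : Type) := MkRState {
  st_height : nat;
  st_prev   : Digest;
  st_root   : Root;
  st_txs    : Digest
}.

Definition QC (n : nat) (Sig : Type) := seq ('I_n * Sig).

Definition qc_signers (n : nat) (PK Digest Sig : Type)
    (pk : 'I_n -> PK) (verify : PK -> Digest -> Sig -> bool)
    (m : Digest) (qc : QC n Sig) : {set 'I_n} :=
  [set i | has (fun p : 'I_n * Sig => (p.1 == i) && verify (pk i) m p.2) qc].

Definition valid_QC (n f : nat) (PK Digest Sig : Type)
    (pk : 'I_n -> PK) (verify : PK -> Digest -> Sig -> bool)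
    (m : Digest) (qc : QC n Sig) : Prop :=
  f.+1 <= #|qc_signers pk verify m qc|.

Definition tsc_accepts (n f : nat) (PK Digest Root Sig : Type)
    (pk : 'I_n -> PK) (verify : PK -> Digest -> Sig -> bool)
    (H : RState Digest Root -> Digest)
    (st S : RState Digest Root) (qc : QC n Sig) : Prop :=
  st_height S = (st_height st).+1 /\
  st_prev S = H st /\
  valid_QC f pk verify (H S) qc.

From mathcomp Require Import all_boot.

Set Implicit Arguments.
Unset Strict Implicit.
Unset Printing Implicit Defensive.

(* An accepted state carries valid signatures from f+1 distinct sequencers, and at
   most f TEEs are compromised, so some uncompromised enclave signed its hash.
   Such an enclave only signs hashes of executed states, so by collision
   resistance the state is execute s txs for some s and txs.  The TSC's
   previous-hash check gives H s = H st_h, and the batch hash gives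
   Htx txs = Htx txs', hence s = st_h and txs = txs': the state is valid. *)

Lemma card_ltn_exists_notin (T : finType) (A B : {set T}) :
  #|B| < #|A| -> exists2 i, i \in A & i \notin B.
Proof.
move=> ltBA; apply/subsetPn/negP => /subset_leq_card leAB.
by rewrite leqNgt ltBA in leAB.
Qed.

Lemma qc_signersP (n : nat) (PK Digest Sig : Type)
    (pk : 'I_n -> PK) (verify : PK -> Digest -> Sig -> bool)
    (m : Digest) (qc : QC n Sig) (i : 'I_n) :
  i \in qc_signers pk verify m qc -> exists sg, verify (pk i) m sg.
Proof.
rewrite inE; elim: qc => //= -[j sg] qc IHqc /orP [/andP [_ signed] | /IHqc //].
by exists sg.
Qed.

Lemma valid_QC_uncompromised_signer (n f : nat) (PK Digest Sig : Type)
    (pk : 'I_n -> PK) (verify : PK -> Digest -> Sig -> bool)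
    (C : {set 'I_n}) (m : Digest) (qc : QC n Sig) :
  #|C| <= f -> valid_QC f pk verify m qc ->
  exists2 i, i \notin C & exists sg, verify (pk i) m sg.
Proof.
move=> leCf validqc.
have [i signer iNC] := card_ltn_exists_notin (leq_ltn_trans leCf validqc).
by exists i; last exact: qc_signersP signer.
Qed.

Lemma execute_eq_of_hashes (Digest Root Tx : Type)
    (H : RState Digest Root -> Digest) (Htx : seq Tx -> Digest)
    (H_cr : injective H) (Htx_cr : injective Htx)
    (execute : RState Digest Root -> seq Tx -> RState Digest Root)
    (exec_prev : forall s txs, st_prev (execute s txs) = H s)
    (exec_txs : forall s txs, st_txs (execute s txs) = Htx txs)
    (s st : RState Digest Root) (txs txs' : seq Tx) :
  st_prev (execute s txs) = H st -> st_txs (execute s txs) = Htx txs' ->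
  execute s txs = execute st txs'.
Proof.
by rewrite exec_prev exec_txs => /H_cr-> /Htx_cr->.
Qed.

Theorem lemma2
  (n f : nat) (Digest Root Tx PK Sig : Type)
  (* hash functions on states and on transaction batches; collision resistance *)
  (H : RState Digest Root -> Digest) (Htx : seq Tx -> Digest)
  (H_cr : injective H) (Htx_cr : injective Htx)
  (* deterministic state transition *)
  (execute : RState Digest Root -> seq Tx -> RState Digest Root)
  (exec_prev : forall s txs, st_prev (execute s txs) = H s)
  (exec_txs  : forall s txs, st_txs (execute s txs) = Htx txs)
  (* registered public keys and signature verification *)
  (pk : 'I_n -> PK) (verify : PK -> Digest -> Sig -> bool)
  (* compromised TEEs: at most f *)
  (C : {set 'I_n}) (hC : #|C| <= f)
  (* messages actually signed by each enclave *)
  (enclave_signed : 'I_n -> Digest -> Prop)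
  (* an uncompromised enclave only signs (hashes of) states it produced by
     executing the protocol program on some input state and batch *)
  (honest_enclave : forall i m, i \notin C -> enclave_signed i m ->
      exists s txs, m = H (execute s txs))
  (* the key of an uncompromised enclave is secret: every valid signature
     under pk_i was produced by enclave i *)
  (unforgeable : forall i m sg, i \notin C -> verify (pk i) m sg ->
      enclave_signed i m)
  (* latest state recorded by the TSC, forged state and its batch *)
  (st_h st' : RState Digest Root) (txs' : seq Tx)
  (h_batch : st_txs st' = Htx txs')
  (h_invalid : st' <> execute st_h txs') :
  forall qc : QC n Sig, ~ tsc_accepts f pk verify H st_h st' qc.
Proof.
move=> qc [_ [prev_ok qc_ok]].
have [i iNC [sg signed]] := valid_QC_uncompromised_signer hC qc_ok.
have [s [txs /H_cr st'_def]] := honest_enclave _ _ iNC (unforgeable _ _ _ iNC signed).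
apply: h_invalid; rewrite st'_def in prev_ok h_batch *.
exact: execute_eq_of_hashes prev_ok h_batch.
Qed.
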